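(* Assume the Perturbed Composite Setting (see context). Let $\beta\ge\rho$, $\gamma:=\rho/\beta$, suppose $\varepsilon<\frac{\mu^2\gamma}{56\rho}$, and let $x_0\in\mathcal{X}$ with $\frac{14\varepsilon}{\mu}<\mathrm{dist}(x_0,\mathcal{X}^* )<\frac{\gamma\mu}{4\rho}$. Define the prox-linear iterates on the perturbed problem $$x_{k+1}=\operatorname{argmin}_{x\in\mathcal{X}}\Big\{h\big(F(x_k)+e+\nabla F(x_k)(x-x_k)\big)+\frac\beta2\|x-x_k\|^2\Big\}.$$ Then for every $k\ge0$ with $\mathrm{dist}(x_{k+1},\mathcal{X}^* )\ge14\varepsilon/\mu$, $$\mathrm{dist}(x_{k+1},\mathcal{X}^* )\le\frac{7\beta}{6\mu}\mathrm{dist}^2(x_k,\mathcal{X}^* ).$$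
   Context: Perturbed Composite Setting: $\mathbf{E},\mathbf{Y}$ are Euclidean spaces ($\|\cdot\|$ the Euclidean norm on $\mathbf{E}$), $\mathcal{X}\subset\mathbf{E}$ nonempty closed convex, $F\colon\mathbf{E}\to\mathbf{Y}$ continuously differentiable with Jacobian $\nabla F(x)$, $h\colon\mathbf{Y}\to\mathbb{R}$ convex and $\eta$-Lipschitz with respect to a norm $|||\cdot|||$ on $\mathbf{Y}$. Set $f=h\circ F$, $f_x(y)=h(F(x)+\nabla F(x)(y-x))$, and assume $\mathcal{X}^*:=\operatorname{argmin}_{\mathcal{X}}f\ne\emptyset$ and constants $\mu,\rho>0$ with $|f(y)-f_x(y)|\le\frac\rho2\|y-x\|^2$ for all $x,y\in\mathcal{X}$ and $f(x)-\min_{\mathcal{X}}f\ge\mu\,\mathrm{dist}(x,\mathcal{X}^* )$ for all $x\in\mathcal{X}$. Fix $e\in\mathbf{Y}$ and set $\tilde f(x)=h(F(x)+e)$, $\varepsilon:=\eta|||e|||$. $\mathrm{dist}$ is the Euclidean distance. *)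

From Stdlib Require Fin.
From Stdlib Require Import Reals Lra ClassicalEpsilon.
Open Scope R_scope.

Definition vec (n : nat) := Fin.t n -> R.

Fixpoint fsum (n : nat) : (Fin.t n -> R) -> R :=
  match n return (Fin.t n -> R) -> R with
  | O => fun _ => 0
  | S m => fun f => f Fin.F1 + fsum m (fun i => f (Fin.FS i))
  end.

Definition vadd {n} (u v : vec n) : vec n := fun i => u i + v i.
Definition vsub {n} (u v : vec n) : vec n := fun i => u i - v i.
Definition vscal {n} (c : R) (v : vec n) : vec n := fun i => c * v i.
Definition dot {n} (u v : vec n) : R := fsum n (fun i => u i * v i).
Definition enorm {n} (v : vec n) : R := sqrt (dot v v).

Definition mat (m n : nat) := Fin.t m -> Fin.t n -> R.
Definition mapply {m n} (A : mat m n) (v : vec n) : vec m :=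
  fun i => fsum n (fun j => A i j * v j).

Definition is_norm {m} (N : vec m -> R) : Prop :=
  (forall v, 0 <= N v) /\
  (forall v, N v = 0 -> v = (fun _ => 0)) /\
  (forall c v, N (vscal c v) = Rabs c * N v) /\
  (forall u v, N (vadd u v) <= N u + N v).

Definition convex_subset {n} (X : vec n -> Prop) : Prop :=
  forall x y t, X x -> X y -> 0 <= t <= 1 ->
    X (vadd (vscal t x) (vscal (1 - t) y)).

Definition closed_subset {n} (X : vec n -> Prop) : Prop :=
  forall x, (forall eps, 0 < eps -> exists y, X y /\ enorm (vsub y x) < eps) -> X x.

Definition convex_fun {m} (h : vec m -> R) : Prop :=
  forall u v t, 0 <= t <= 1 ->
    h (vadd (vscal t u) (vscal (1 - t) v)) <= t * h u + (1 - t) * h v.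

Definition lipschitz_wrt {m} (N : vec m -> R) (eta : R) (h : vec m -> R) : Prop :=
  forall u v, Rabs (h u - h v) <= eta * N (vsub u v).

Definition has_jacobian {n m} (F : vec n -> vec m) (DF : vec n -> mat m n) : Prop :=
  forall x eps, 0 < eps -> exists delta, 0 < delta /\
    forall y, enorm (vsub y x) < delta ->
      enorm (vsub (vsub (F y) (F x)) (mapply (DF x) (vsub y x)))
        <= eps * enorm (vsub y x).

Definition continuous_jacobian {n m} (DF : vec n -> mat m n) : Prop :=
  forall x eps, 0 < eps -> exists delta, 0 < delta /\
    forall y, enorm (vsub y x) < delta ->
      forall i j, Rabs (DF y i j - DF x i j) < eps.

(* Euclidean distance to a set: the infimum of ||x - y|| over y in S
   (well defined for nonempty S). *)
Definition edist {n} (S : vec n -> Prop) (x : vec n) : R :=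
  epsilon (inhabits 0)
    (fun d => (forall y, S y -> d <= enorm (vsub x y)) /\
              (forall d', (forall y, S y -> d' <= enorm (vsub x y)) -> d' <= d)).

Definition argmin_set {n} (X : vec n -> Prop) (f : vec n -> R) (x : vec n) : Prop :=
  X x /\ forall y, X y -> f x <= f y.

From Stdlib Require Import Reals Lra Psatz ClassicalEpsilon FunctionalExtensionality.
Open Scope R_scope.

(* The argument is a one-step estimate.  Writing f = h o F, S = argmin_X f
   and eps = eta |||e|||:
   - the perturbation e moves every value of the linearized model by at most
     eps, since h is eta-Lipschitz;
   - combining the optimality of x_{k+1} for the perturbed model, the
     two-sided quadratic model error (rho/2)||.||^2 and beta >= rho yields
     f(x_{k+1}) <= f(z) + beta ||x_k - z||^2 + 2 eps for every z in S;
   - sharpness turns the left side into mu dist(x_{k+1}, S); taking the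
     infimum over z gives mu d_{k+1} <= beta d_k^2 + 2 eps;
   - finally d_{k+1} >= 14 eps / mu gives 2 eps <= mu d_{k+1} / 7, whence
     d_{k+1} <= 7 beta / (6 mu) d_k^2. *)

Lemma edist_spec {n} (S : vec n -> Prop) (a : vec n) : (exists y, S y) ->
  (forall y, S y -> edist S a <= enorm (vsub a y)) /\
  (forall d, (forall y, S y -> d <= enorm (vsub a y)) -> d <= edist S a).
Proof.
  intros [y0 Hy0]. unfold edist. apply epsilon_spec.
  set (E := fun r => exists y, S y /\ r = - enorm (vsub a y)).
  assert (HE_bounded : bound E).
  { exists 0. intros r [y [_ ->]]. unfold enorm.
    pose proof (sqrt_pos (dot (vsub a y) (vsub a y))). lra. }
  assert (HE_inhabited : exists r, E r) by (exists (- enorm (vsub a y0)); exists y0; auto).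
  destruct (completeness E HE_bounded HE_inhabited) as [sup [Hub Hleast]].
  exists (- sup). split.
  - intros y Hy. assert (E (- enorm (vsub a y))) as HEy by (exists y; auto).
    specialize (Hub _ HEy). lra.
  - intros d Hd. enough (sup <= - d) by lra.
    apply Hleast. intros r [y [Hy ->]]. specialize (Hd y Hy). lra.
Qed.

Lemma Rabs_le_between (a b : R) : Rabs a <= b -> - b <= a <= b.
Proof. unfold Rabs. destruct (Rcase_abs a); lra. Qed.

Lemma enorm_nonneg {n} (v : vec n) : 0 <= enorm v.
Proof. apply sqrt_pos. Qed.

Lemma enorm_sym {n} (u v : vec n) : enorm (vsub u v) = enorm (vsub v u).
Proof.
  unfold enorm, dot, vsub.
  replace (fun i => (u i - v i) * (u i - v i)) with (fun i => (v i - u i) * (v i - u i)).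
  - reflexivity.
  - apply functional_extensionality; intros; ring.
Qed.

(* A lower bound on c times every squared distance to S is a lower bound
   on c times the squared distance to S: the infimum commutes with the
   monotone map r |-> c r^2 on [0, +oo). *)
Lemma le_scaled_sq_edist {n} (S : vec n -> Prop) (a : vec n) (t c : R) :
  (exists y, S y) -> 0 < c ->
  (forall y, S y -> t <= c * enorm (vsub a y) ^ 2) ->
  t <= c * edist S a ^ 2.
Proof.
  intros HS Hc Ht.
  destruct (Rle_or_lt t 0) as [Ht0 | Ht0]; [nra |].
  assert (Hr : 0 <= t / c) by (apply Rlt_le, Rdiv_lt_0_compat; lra).
  assert (Hsqrt : sqrt (t / c) <= edist S a).
  { apply (proj2 (edist_spec S a HS)). intros y Hy.
    rewrite <- (sqrt_pow2 (enorm (vsub a y))) by apply enorm_nonneg.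
    apply sqrt_le_1_alt.
    apply (Rmult_le_reg_l c); [exact Hc |].
    unfold Rdiv. rewrite <- Rmult_assoc, (Rmult_comm c t), Rmult_assoc,
      Rinv_r, Rmult_1_r by lra.
    exact (Ht y Hy). }
  assert (Hsq : t / c <= edist S a ^ 2).
  { rewrite <- (pow2_sqrt (t / c)) by exact Hr.
    apply pow_incr. split; [apply sqrt_pos | exact Hsqrt]. }
  apply (Rmult_le_compat_l c) in Hsq; [| lra].
  replace (c * (t / c)) with t in Hsq by (field; lra). exact Hsq.
Qed.

(* Adding e inside an eta-Lipschitz function changes its value by at most
   eta |||e|||; this is the whole effect of the perturbation on the model. *)
Lemma lipschitz_perturbation {m} (N : vec m -> R) (eta : R) (h : vec m -> R)
    (u e w : vec m) :
  lipschitz_wrt N eta h ->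
  Rabs (h (vadd (vadd u e) w) - h (vadd u w)) <= eta * N e.
Proof.
  intros Hlip.
  replace e with (vsub (vadd (vadd u e) w) (vadd u w)) at 2 by
    (apply functional_extensionality; intros; unfold vsub, vadd; ring).
  apply Hlip.
Qed.

Section ProxLinearStep.

Variables (n m : nat) (X : vec n -> Prop) (F : vec n -> vec m)
  (DF : vec n -> mat m n) (h : vec m -> R) (N : vec m -> R)
  (eta rho beta : R) (e : vec m).

Hypothesis Hlip : lipschitz_wrt N eta h.
Hypothesis Hquad : forall a y, X a -> X y ->
  Rabs (h (F y) - h (vadd (F a) (mapply (DF a) (vsub y a))))
    <= rho / 2 * enorm (vsub y a) ^ 2.
Hypothesis Hbeta : beta >= rho.

Definition perturbed_prox_model (a y : vec n) : R :=
  h (vadd (vadd (F a) e) (mapply (DF a) (vsub y a))) + beta / 2 * enorm (vsub y a) ^ 2.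

(* One perturbed prox-linear step from a decreases f below any comparison
   point z of X up to beta ||a - z||^2 and twice the perturbation size:
   the model is an upper bound on f (as beta >= rho) and overestimates f(z)
   by at most beta ||z - a||^2, each use of the perturbed model costing eps. *)
Lemma prox_linear_step_bound (a a_next z : vec n) :
  X a -> X z -> argmin_set X (perturbed_prox_model a) a_next ->
  h (F a_next) <= h (F z) + beta * enorm (vsub a z) ^ 2 + 2 * (eta * N e).
Proof.
  intros Ha Hz [Hnext Hopt].
  pose proof (Hopt z Hz) as Hmodel. unfold perturbed_prox_model in Hmodel.
  pose proof (Rabs_le_between _ _ (Hquad a a_next Ha Hnext)) as Hq_next.
  pose proof (Rabs_le_between _ _ (Hquad a z Ha Hz)) as Hq_z.
  pose proof (Rabs_le_between _ _ (lipschitz_perturbation N eta h (F a) e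
    (mapply (DF a) (vsub a_next a)) Hlip)) as Hp_next.
  pose proof (Rabs_le_between _ _ (lipschitz_perturbation N eta h (F a) e
    (mapply (DF a) (vsub z a)) Hlip)) as Hp_z.
  rewrite (enorm_sym a z).
  assert (0 <= enorm (vsub a_next a) ^ 2) by apply pow2_ge_0.
  assert (0 <= enorm (vsub z a) ^ 2) by apply pow2_ge_0.
  nra.
Qed.

End ProxLinearStep.

Theorem theorem9p7
  (n m : nat) (X : vec n -> Prop) (F : vec n -> vec m) (DF : vec n -> mat m n)
  (h : vec m -> R) (N : vec m -> R) (eta mu rho beta : R) (e : vec m)
  (x : nat -> vec n)
  (HXne : exists x0, X x0) (HXcl : closed_subset X) (HXcv : convex_subset X)
  (HFdiff : has_jacobian F DF) (HFc1 : continuous_jacobian DF)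
  (HN : is_norm N) (Hhcvx : convex_fun h) (Hhlip : lipschitz_wrt N eta h)
  (Hstar : exists xs, argmin_set X (fun y => h (F y)) xs)
  (Hmu : 0 < mu) (Hrho : 0 < rho)
  (Hquad : forall a y, X a -> X y ->
     Rabs (h (F y) - h (vadd (F a) (mapply (DF a) (vsub y a))))
       <= rho / 2 * enorm (vsub y a) ^ 2)
  (Hsharp : forall a xs, X a -> argmin_set X (fun y => h (F y)) xs ->
     h (F a) - h (F xs) >= mu * edist (argmin_set X (fun y => h (F y))) a)
  (Hbeta : beta >= rho)
  (Heps : eta * N e < mu ^ 2 * (rho / beta) / (56 * rho))
  (Hx0 : X (x 0%nat))
  (Hx0lo : 14 * (eta * N e) / mu < edist (argmin_set X (fun y => h (F y))) (x 0%nat))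
  (Hx0hi : edist (argmin_set X (fun y => h (F y))) (x 0%nat) < (rho / beta) * mu / (4 * rho))
  (Hiter : forall k : nat,
     argmin_set X
       (fun y => h (vadd (vadd (F (x k)) e) (mapply (DF (x k)) (vsub y (x k))))
                 + beta / 2 * enorm (vsub y (x k)) ^ 2)
       (x (S k))) :
  forall k : nat,
    edist (argmin_set X (fun y => h (F y))) (x (S k)) >= 14 * (eta * N e) / mu ->
    edist (argmin_set X (fun y => h (F y))) (x (S k))
      <= 7 * beta / (6 * mu) * edist (argmin_set X (fun y => h (F y))) (x k) ^ 2.
Proof.
  intros k Hfar.
  set (Xs := argmin_set X (fun y => h (F y))) in *.
  set (eps := eta * N e) in *.
  assert (HXk : X (x k)) by (destruct k; [exact Hx0 | apply (Hiter k)]).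
  assert (Hstep : forall xs, Xs xs ->
            mu * edist Xs (x (S k)) - 2 * eps <= beta * enorm (vsub (x k) xs) ^ 2).
  { intros xs Hxs.
    pose proof (Hsharp _ _ (proj1 (Hiter k)) Hxs) as Hsh.
    pose proof (prox_linear_step_bound n m X F DF h N eta rho beta e Hhlip Hquad Hbeta
                  (x k) (x (S k)) xs HXk (proj1 Hxs) (Hiter k)) as Hdesc.
    fold eps in Hdesc. lra. }
  pose proof (le_scaled_sq_edist Xs (x k) _ beta Hstar ltac:(lra) Hstep) as Hrate.
  assert (Habsorb : 14 * eps <= mu * edist Xs (x (S k))).
  { apply Rge_le, (Rmult_le_compat_r mu) in Hfar; [| lra].
    replace (14 * eps / mu * mu) with (14 * eps) in Hfar by (field; lra). lra. }
  apply (Rmult_le_reg_r (6 * mu)); [lra |].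
  replace (7 * beta / (6 * mu) * edist Xs (x k) ^ 2 * (6 * mu))
    with (7 * (beta * edist Xs (x k) ^ 2)) by (field; lra).
  lra.
Qed.
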